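(* Consider the protocol $P_{RL}$ with parameter $N$ on a directed ring of size $n$ with $2\le n\le N$, under the uniformly random scheduler. Let $C$ be a configuration in which no agent is a leader. Then the expected number of steps until the execution from $C$ reaches a configuration containing a leader is $O(nN)$ (with a constant independent of $n$, $N$ and $C$).
   Context: Model. A population is a directed ring of $n\ge 2$ anonymous agents $u_0,\dots,u_{n-1}$ (indices modulo $n$) with arcs $e_i=(u_i,u_{i+1})$. A configuration assigns a state to each agent. In an interaction on arc $e_i$, initiator $u_i$ and responder $u_{i+1}$ update their states by the transition function and all other agents keep their states. The uniformly random scheduler chooses at each step $t=0,1,2,\dots$ an arc uniformly at random among the $n$ arcs, independently; the execution from $C_0$ is the resulting sequence of configurations $C_0,C_1,\dots$. Protocol $P_{RL}$ (parameter $N$). Each agent has variables $\mathit{leader}\in\{0,1\}$, $\mathit{bullet}\in\{0,1,2\}$, $\mathit{shield}\in\{0,1\}$, $\mathit{signal}\in\{0,1\}$, $\mathit{dist}\in\{0,\dots,N\}$; it is a leader if $\mathit{leader}=1$. In an interaction with initiator $l$ and responder $r$ the following are executed in order: 1. If $l.\mathit{leader}=1$ then $l.\mathit{dist}\gets 0$. 2. If $r.\mathit{leader}=1$ then $r.\mathit{dist}\gets 0$; else if $r.\mathit{bullet}=0$ then $r.\mathit{dist}\gets\min(l.\mathit{dist}+1,N)$. 3. If $r.\mathit{dist}=N$ then $r.\mathit{leader}\gets1$, $r.\mathit{bullet}\gets2$, $r.\mathit{shield}\gets1$, $r.\mathit{signal}\gets0$, $r.\mathit{dist}\gets0$. 4.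 If $l.\mathit{leader}=1$ and $l.\mathit{signal}=1$ then $l.\mathit{bullet}\gets2$, $l.\mathit{shield}\gets1$, $l.\mathit{signal}\gets0$. 5. If $r.\mathit{leader}=1$ and $r.\mathit{signal}=1$ then $r.\mathit{bullet}\gets1$, $r.\mathit{shield}\gets0$, $r.\mathit{signal}\gets0$. 6. If $l.\mathit{bullet}>0$ and $r.\mathit{leader}=1$: set $r.\mathit{leader}\gets0$ if ($l.\mathit{bullet}=2$ and $r.\mathit{shield}=0$); then $l.\mathit{bullet}\gets0$. Else, if $l.\mathit{bullet}>0$ and $r.\mathit{leader}=0$: if $r.\mathit{bullet}=0$ then $r.\mathit{bullet}\gets l.\mathit{bullet}$; then $l.\mathit{bullet}\gets0$ and $r.\mathit{signal}\gets0$. 7. $l.\mathit{signal}\gets\max(l.\mathit{signal},r.\mathit{signal},r.\mathit{leader})$. *)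

From mathcomp Require Import all_boot all_order all_algebra.
Set Implicit Arguments. Unset Strict Implicit. Unset Printing Implicit Defensive.
Import Order.TTheory GRing.Theory Num.Theory.

Record agent (N : nat) := Agent {
  leader : bool;
  bullet : 'I_3;
  shield : bool;
  signal : bool;
  dist   : 'I_N.+1
}.
Arguments Agent {N}.

Section Protocol.
Variable N : nat.
Implicit Types a l r : agent N.

Definition set_dist a (d : 'I_N.+1) : agent N :=
  Agent (leader a) (bullet a) (shield a) (signal a) d.
Definition set_leader a (b : bool) : agent N :=
  Agent b (bullet a) (shield a) (signal a) (dist a).
Definition set_bullet a (b : 'I_3) : agent N :=
  Agent (leader a) b (shield a) (signal a) (dist a).
Definition set_signal a (b : bool) : agent N :=
  Agent (leader a) (bullet a) (shield a) b (dist a).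

Definition b0 : 'I_3 := inord 0.
Definition b1 : 'I_3 := inord 1.
Definition b2 : 'I_3 := inord 2.
Definition d0 : 'I_N.+1 := inord 0.

Definition st1 l r : agent N * agent N :=
  (if leader l then set_dist l d0 else l, r).
Definition st2 l r : agent N * agent N :=
  (l, if leader r then set_dist r d0
      else if nat_of_ord (bullet r) == 0 then set_dist r (inord (minn (dist l).+1 N))
      else r).
Definition st3 l r : agent N * agent N :=
  (l, if nat_of_ord (dist r) == N then Agent true b2 true false d0 else r).
Definition st4 l r : agent N * agent N :=
  (if leader l && signal l then Agent (leader l) b2 true false (dist l) else l, r).
Definition st5 l r : agent N * agent N :=
  (l, if leader r && signal r then Agent (leader r) b1 false false (dist r) else r).
Definition st6 l r : agent N * agent N :=
  if (0 < bullet l) && leader r then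
    (set_bullet l b0,
     if (nat_of_ord (bullet l) == 2) && ~~ shield r then set_leader r false else r)
  else if (0 < bullet l) && ~~ leader r then
    (set_bullet l b0,
     set_signal (if nat_of_ord (bullet r) == 0 then set_bullet r (bullet l) else r) false)
  else (l, r).
Definition st7 l r : agent N * agent N :=
  (set_signal l [|| signal l, signal r | leader r], r).

Definition lift2 (f : agent N -> agent N -> agent N * agent N) (p : agent N * agent N) :=
  f p.1 p.2.

(* transition function: initiator l, responder r, steps 1..7 in order *)
Definition delta l r : agent N * agent N :=
  lift2 st7 (lift2 st6 (lift2 st5 (lift2 st4 (lift2 st3 (lift2 st2 (st1 l r)))))).

End Protocol.

Definition config (N n : nat) := 'I_n -> agent N.

Definition step (N n : nat) (C : config N n) (i : 'I_n) : config N n :=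
  fun j => if j == i then (delta (C i) (C (ordS i))).1
           else if j == ordS i then (delta (C i) (C (ordS i))).2
           else C j.

Definition has_leader (N n : nat) (C : config N n) : bool :=
  [exists j : 'I_n, leader (C j)].

(* surv t C = probability, under the uniformly random scheduler, that the
   configurations C_0, ..., C_t of the execution from C_0 = C all contain no
   leader, i.e. P(T > t) where T is the hitting time of a leader configuration. *)
Fixpoint surv (N n : nat) (t : nat) (C : config N n) : rat :=
  if has_leader C then 0%R
  else match t with
       | 0 => 1%R
       | t'.+1 => ((n%:R)^-1 * \sum_(i < n) surv t' (step C i))%R
       end.

(* Expected hitting time E[T] = sum_{t >= 0} P(T > t); partial sums: *)
Definition exp_time_partial (N n : nat) (C : config N n) (T : nat) : rat :=
  (\sum_(t < T) surv t C)%R.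

From mathcomp Require Import all_boot all_order all_algebra.
From mathcomp Require Import zify ring lra.
Import Order.TTheory GRing.Theory Num.Theory.
Set Implicit Arguments. Unset Strict Implicit. Unset Printing Implicit Defensive.

(* While no leader exists, an interaction only pushes the initiator's bullet to
   the responder and lets the responder copy the initiator's distance plus one
   (unless the responder already holds a bullet).  Give every agent a level: if
   some bullet exists, the distance of the nearest bullet holder behind it plus
   the number of steps back to that holder; otherwise its own distance.  Firing
   arc i changes exactly one level, and the n possible changes telescope to n,
   so the total level grows by 1 per step in expectation.  The total level stays
   below n(N + n) <= 2nN until a leader appears, hence 4nN minus it is a
   potential that drops by at least 1 per step in expectation, and the expected
   time to elect a leader is at most 4nN. *)

Lemma b0E : b0 = 0 :> nat. Proof. by rewrite inordK. Qed.
Lemma b1E : b1 = 1 :> nat. Proof. by rewrite inordK. Qed.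
Lemma b2E : b2 = 2 :> nat. Proof. by rewrite inordK. Qed.
Lemma d0E N : d0 N = 0 :> nat. Proof. by rewrite inordK. Qed.

Definition next_dist N (l r : agent N) : nat :=
  if bullet r == 0 :> nat then minn (dist l).+1 N else dist r.

Lemma delta_nonleaders N (l r : agent N) : ~~ leader l -> ~~ leader r ->
  [/\ leader (delta l r).1 = false, leader (delta l r).2 = (next_dist l r == N),
      bullet (delta l r).1 = 0 :> nat, dist (delta l r).1 = dist l :> nat &
      next_dist l r != N ->
        (0 < bullet (delta l r).2)%N = (0 < bullet r)%N || (0 < bullet l)%N
        /\ dist (delta l r).2 = next_dist l r :> nat].
Proof.
case: l r => [ll lb ls lsg ld] [rl rb rs rsg rd] /= /negbTE -> /negbTE ->.
rewrite /next_dist /delta /lift2 /st1 /st2 /st3 /st4 /st5 /st6 /st7 /=.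
have ? : (minn ld.+1 N < N.+1)%N by rewrite ltnS geq_minr.
repeat match goal with
  | |- context [if ?c then _ else _] =>
      lazymatch c with context [if _ then _ else _] => fail | _ => idtac end;
      case: (boolP c) => ?; rewrite /= ?b0E ?b1E ?b2E ?d0E ?inordK //=
  end.
all: constructor; try done; try (move=> ?; split); lia.
Qed.

Lemma ordS_neq n (i : 'I_n) : (1 < n)%N -> ordS i != i.
Proof.
move=> n_gt1; apply/eqP => /(congr1 val) /=; have := ltn_ord i.
case: (ltnP i.+1 n) => [lt_i1n|le_ni1] lt_in; first by rewrite modn_small //; lia.
have -> : i.+1 = n by lia.
by rewrite modnn; lia.
Qed.

Lemma ord_pred_neq n (i : 'I_n) : (1 < n)%N -> ord_pred i != i.
Proof.
move=> n_gt1; apply: contraNneq (ordS_neq i n_gt1) => pred_i.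
by rewrite -{1}pred_i ord_predK.
Qed.

Lemma iter_ord_pred_val n t (x : 'I_n) : (t <= x)%N ->
  iter t (@ord_pred n) x = x - t :> nat.
Proof.
elim: t => [|t IHt] le_tx /=; first by rewrite subn0.
have := ltn_ord x; rewrite IHt ?(ltnW le_tx) // => lt_xn.
have -> : ((x - t + n).-1 = (x - t.+1) + n)%N by lia.
by rewrite modnDr modn_small; lia.
Qed.

Lemma iter_ord_pred_onto n (j k : 'I_n) : exists2 s, (s < n)%N & iter s (@ord_pred n) j = k.
Proof.
have lt_jn := ltn_ord j; have lt_kn := ltn_ord k.
have [le_kj|lt_jk] := leqP k j.
  by exists (j - k)%N; [lia | apply: val_inj; rewrite /= iter_ord_pred_val; lia].
exists ((n.-1 - k) + j.+1)%N; first by lia.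
have at0 : iter j (@ord_pred n) j = 0 :> nat by rewrite iter_ord_pred_val // subnn.
have at_last : ord_pred (iter j (@ord_pred n) j) = n.-1 :> nat.
  by rewrite /= at0 add0n modn_small //; lia.
by apply: val_inj; rewrite iterD iterS /= iter_ord_pred_val at_last; lia.
Qed.

Section BackDist.
Variables (n : nat) (b : 'I_n -> bool) (d : 'I_n -> nat).

(* [d k + s] for the first [k = ord_pred^s j] with [b k]; the fuel [n] suffices
   as soon as some [b k] holds. *)
Fixpoint backdist_iter (j : 'I_n) (m : nat) : nat :=
  if m is m'.+1 then (if b j then d j else (backdist_iter (ord_pred j) m').+1) else d j.

Definition backdist j := backdist_iter j n.

Lemma backdist_iter_le D : (forall j, d j <= D)%N -> forall m j, (backdist_iter j m <= D + m)%N.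
Proof.
move=> le_dD; elim=> [|m IHm] j /=; first by rewrite addn0.
by case: (b j); [apply: leq_trans (le_dD j) (leq_addr _ _) | rewrite addnS ltnS].
Qed.

Lemma backdist_iterS m j : (exists2 s, (s < m)%N & b (iter s (@ord_pred n) j)) ->
  backdist_iter j m.+1 = backdist_iter j m.
Proof.
elim: m j => [|m IHm] j [[|s] lt_sm bs] //=; case: (boolP (b j)) => // nbj.
  by rewrite bs in nbj.
by congr S; apply: IHm; exists s; rewrite -?iterSr.
Qed.

Hypothesis has_b : exists k, b k.

Lemma backdist_rec j : backdist j = if b j then d j else (backdist (ord_pred j)).+1.
Proof.
have [k bk] := has_b; have [s lt_sn sk] := iter_ord_pred_onto j k.
by rewrite /backdist -backdist_iterS //; exists s; rewrite ?sk.
Qed.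

Lemma backdist_unique (f : 'I_n -> nat) :
  (forall j, f j = if b j then d j else (f (ord_pred j)).+1) -> f =1 backdist.
Proof.
move=> f_rec j; have [k bk] := has_b; have [s _ sk] := iter_ord_pred_onto j k.
elim: s j sk => [|s IHs] j sk; rewrite f_rec backdist_rec.
  by rewrite /= in sk; rewrite sk bk.
by case: (b j) => //; congr S; apply: IHs; rewrite -iterSr.
Qed.

End BackDist.

Definition bullets N n (C : config N n) (j : 'I_n) : bool := (0 < bullet (C j))%N.
Definition dists N n (C : config N n) (j : 'I_n) : nat := dist (C j).
Definition has_bullets N n (C : config N n) : bool := [exists j, bullets C j].

Definition level N n (C : config N n) : 'I_n -> nat :=
  if has_bullets C then backdist (bullets C) (dists C) else dists C.

(* The only agent whose level an interaction on arc [i] can change: without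
   bullets the responder, with bullets the initiator, whose bullet moves on. *)
Definition updated N n (C : config N n) (i : 'I_n) : 'I_n :=
  if has_bullets C then i else ordS i.

Section Interaction.
Variables (N n : nat) (C : config N n) (i : 'I_n).
Hypotheses (n_gt1 : (1 < n)%N) (leaderless : ~~ has_leader C).

Local Notation r := (ordS i).
Local Notation C' := (step C i).

Lemma nonleader j : ~~ leader (C j).
Proof. by move: leaderless; rewrite negb_exists => /forallP. Qed.

Lemma step_initiator : C' i = (delta (C i) (C r)).1.
Proof. by rewrite /step eqxx. Qed.

Lemma step_responder : C' r = (delta (C i) (C r)).2.
Proof. by rewrite /step (negbTE (ordS_neq i n_gt1)) eqxx. Qed.

Lemma step_other j : j != i -> j != r -> C' j = C j.
Proof. by rewrite /step => /negbTE -> /negbTE ->. Qed.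

Lemma has_leader_step : has_leader C' = (next_dist (C i) (C r) == N).
Proof.
have [lead_l lead_r _ _ _] := delta_nonleaders (nonleader i) (nonleader r).
apply/existsP/idP => [[j]|elected]; last by exists r; rewrite step_responder lead_r.
have [->|ne_ji] := eqVneq j i; first by rewrite step_initiator lead_l.
have [->|ne_jr] := eqVneq j r; first by rewrite step_responder lead_r.
by rewrite step_other // (negbTE (nonleader j)).
Qed.

Hypothesis leaderless_step : ~~ has_leader C'.

Lemma no_election : next_dist (C i) (C r) != N.
Proof. by rewrite -has_leader_step. Qed.

Lemma bullets_step j : bullets C' j =
  if j == i then false else if j == r then bullets C r || bullets C i else bullets C j.
Proof.
have [_ _ bullet_l _ /(_ no_election) [bullet_r _]] :=
  delta_nonleaders (nonleader i) (nonleader r).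
have [->|ne_ji] := eqVneq j i; first by rewrite /bullets step_initiator bullet_l.
have [->|ne_jr] := eqVneq j r; first by rewrite /bullets step_responder bullet_r.
by rewrite /bullets step_other.
Qed.

Lemma dists_step j : dists C' j =
  if j == r then (if bullets C r then dists C r else (dists C i).+1) else dists C j.
Proof.
have [_ _ _ dist_l /(_ no_election) [_ dist_r]] :=
  delta_nonleaders (nonleader i) (nonleader r).
have [->|ne_jr] := eqVneq j r.
  rewrite /dists step_responder dist_r /bullets; move: no_election; rewrite /next_dist.
  by case: (C r) => ? [[|m] ?] /=; lia.
have [->|ne_ji] := eqVneq j i; first by rewrite /dists step_initiator dist_l.
by rewrite /dists step_other.
Qed.

Lemma has_bullets_step : has_bullets C' = has_bullets C.
Proof.
apply/existsP/existsP => [[j]|[k bk]].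
  rewrite bullets_step; case: ifP => // _.
  by case: ifP => [_ /orP[] ? | _ ?]; [exists r | exists i | exists j].
have [eq_ki|ne_ki] := eqVneq k i.
  by exists r; rewrite bullets_step (negbTE (ordS_neq i n_gt1)) eqxx -eq_ki bk orbT.
exists k; rewrite bullets_step (negbTE ne_ki).
by case: ifP => [/eqP eq_kr|_]; rewrite -?eq_kr bk.
Qed.

Lemma backdist_step (has_b : has_bullets C) j :
  backdist (bullets C') (dists C') j =
  if j == i then (backdist (bullets C) (dists C) (ord_pred i)).+1
  else backdist (bullets C) (dists C) j.
Proof.
have /existsP has_b' : has_bullets C' by rewrite has_bullets_step.
move/existsP: has_b => has_b.
set b := bullets C; set d := dists C.
pose f k := if k == i then (backdist b d (ord_pred i)).+1 else backdist b d k.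
suff /(_ j) <- : f =1 backdist (bullets C') (dists C') by [].
apply: (backdist_unique has_b') => {}j.
rewrite bullets_step dists_step -/b -/d /f.
have [->|ne_ji] := eqVneq j i; first by rewrite (negbTE (ord_pred_neq i n_gt1)).
have [->|ne_jr] := eqVneq j r.
  rewrite ordSK eqxx (backdist_rec _ has_b r) ordSK (backdist_rec _ has_b i).
  by rewrite -/b; case: (b r); case: (b i).
have -> : (ord_pred j == i) = false.
  by apply: contraNF ne_jr => /eqP <-; rewrite ord_predK.
exact: backdist_rec.
Qed.

Lemma level_step j :
  level C' j =
  if j == updated C i then (level C (ord_pred (updated C i))).+1 else level C j.
Proof.
rewrite /level /updated has_bullets_step.
case: (boolP (has_bullets C)) => [has_b|no_b]; first exact: backdist_step.
have no_br : bullets C r = false.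
  by apply: negbTE; move: no_b; rewrite negb_exists => /forallP.
by rewrite dists_step no_br ordSK.
Qed.

End Interaction.

Definition progress N n (C : config N n) : nat := \sum_j level C j.

Local Open Scope ring_scope.

Definition gain N n (C : config N n) (i : 'I_n) : rat :=
  (level C (ord_pred (updated C i))).+1%:R - (level C (updated C i))%:R.

Lemma big_update n (f : 'I_n -> nat) k x :
  (\sum_j (if j == k then x else f j) + f k = \sum_j f j + x)%N.
Proof.
rewrite (bigD1 k) //= [in RHS](bigD1 k) //= eqxx.
rewrite (eq_bigr f) => [|j /negbTE -> //]; lia.
Qed.

Lemma progress_step N n (C : config N n) i : (1 < n)%N -> ~~ has_leader C ->
  ~~ has_leader (step C i) -> (progress (step C i))%:R = (progress C)%:R + gain C i.
Proof.
move=> n_gt1 leaderless leaderless_step.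
have := big_update (level C) (updated C i) (level C (ord_pred (updated C i))).+1.
under eq_bigr => j _ do rewrite -(level_step n_gt1 leaderless leaderless_step).
move=> /(congr1 (fun m => m%:R : rat)); rewrite !natrD /gain /progress; lra.
Qed.

Lemma updated_inj N n (C : config N n) : injective (updated C).
Proof. by rewrite /updated; case: (has_bullets C) => //; apply: ordS_inj. Qed.

Lemma sum_gain N n (C : config N n) : \sum_i gain C i = n%:R.
Proof.
transitivity (\sum_k ((level C (ord_pred k)).+1%:R - (level C k)%:R) : rat).
  by rewrite [RHS](reindex_inj (@updated_inj _ _ C)).
rewrite sumrB; under eq_bigr => k _ do rewrite -natr1.
rewrite big_split /= sumr_const card_ord.
have -> : \sum_k (level C (ord_pred k))%:R = \sum_k (level C k)%:R :> rat.
  by rewrite [RHS](reindex_inj (@ord_pred_inj n)).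
by rewrite addrAC subrr add0r.
Qed.

Lemma level_le N n (C : config N n) j : (level C j <= N + n)%N.
Proof.
have dists_le k : (dists C k <= N)%N by rewrite -ltnS ltn_ord.
by rewrite /level; case: ifP => _; [apply: backdist_iter_le | apply: leq_trans (leq_addr _ _)].
Qed.

Lemma progress_le N n (C : config N n) : (progress C <= n * (N + n))%N.
Proof.
rewrite -[n in (n * _)%N]card_ord -sum_nat_const.
by apply: leq_sum => j _; apply: level_le.
Qed.

Lemma gain_le N n (C : config N n) i : gain C i <= (N + n).+1%:R.
Proof.
rewrite /gain lerBlDr ler_wpDr ?ler0n // ler_nat ltnS; exact: level_le.
Qed.

Lemma exp_time_partial_le_potential N n (Psi : config N n -> rat) :
  (forall C, 0 <= Psi C) ->
  (forall C, ~~ has_leader C -> 1 + n%:R^-1 * \sum_i Psi (step C i) <= Psi C) ->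
  forall T C, exp_time_partial C T <= Psi C.
Proof.
move=> Psi_ge0 Psi_drift; elim=> [|T IHT] C; first by rewrite /exp_time_partial big_ord0.
case: (boolP (has_leader C)) => [leader_C|leaderless].
  rewrite /exp_time_partial big1 // => t _.
  by case: t => [[|t] _] /=; rewrite leader_C.
rewrite /exp_time_partial big_ord_recl /= (negbTE leaderless).
under eq_bigr => t _ do rewrite add0n.
rewrite -mulr_sumr exchange_big /=; apply: le_trans (Psi_drift C leaderless).
by rewrite lerD2l ler_wpM2l ?invr_ge0 ?ler0n //; apply: ler_sum => i _; apply: IHT.
Qed.

Section Potential.
Variables N n : nat.
Hypotheses (n_ge2 : (2 <= n)%N) (n_leN : (n <= N)%N).

(* [progress] stays below [n (N + n) <= 2 n N], and the remaining [2 n N]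
   absorbs the gain of the step on which a leader is elected. *)
Definition potential (C : config N n) : rat :=
  if has_leader C then 0 else 4 * (n * N)%:R - (progress C)%:R.

Lemma progress_headroom (C : config N n) :
  (progress C)%:R + (N + n).+1%:R <= 4 * (n * N)%:R :> rat.
Proof.
have le_progress := progress_le C.
by rewrite -natrM -natrD ler_nat; nia.
Qed.

Lemma potential_ge0 C : 0 <= potential C.
Proof.
rewrite /potential; case: ifP => // _.
by have := progress_headroom C; rewrite subr_ge0; apply: le_trans; rewrite lerDl.
Qed.

Lemma potential_drift C : ~~ has_leader C ->
  1 + n%:R^-1 * \sum_i potential (step C i) <= potential C.
Proof.
move=> leaderless; set K : rat := 4 * (n * N)%:R; set F : rat := (progress C)%:R.
have step_le i : potential (step C i) <= K - F - gain C i.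
  rewrite /potential; case: ifPn => [_|leaderless_step].
    by have := progress_headroom C; have := gain_le C i; rewrite -/K -/F; lra.
  by rewrite progress_step // -/F -/K; lra.
have n_neq0 : n%:R != 0 :> rat by rewrite pnatr_eq0 -lt0n; apply: leq_trans n_ge2.
rewrite /potential (negbTE leaderless) -/K -/F.
apply: le_trans (_ : 1 + n%:R^-1 * \sum_(i < n) (K - F - gain C i) <= _).
  by rewrite lerD2l ler_wpM2l ?invr_ge0 ?ler0n //; apply: ler_sum => i _; exact: step_le.
rewrite sumrB sumr_const card_ord sum_gain.
have -> : n%:R^-1 * ((K - F) *+ n - n%:R) = K - F - 1 by rewrite -mulr_natl; field.
lra.
Qed.

End Potential.

Theorem lemma10 :
  exists c : rat, 0 < c /\
    forall (N n : nat), (2 <= n)%N -> (n <= N)%N ->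
    forall C : config N n, ~~ has_leader C ->
    forall T : nat, exp_time_partial C T <= c * (n * N)%:R.
Proof.
exists 4; split => // N n n_ge2 n_leN C leaderless T.
apply: le_trans (exp_time_partial_le_potential (potential_ge0 n_ge2 n_leN)
  (potential_drift n_ge2 n_leN) T C) _.
by rewrite /potential (negbTE leaderless) lerBlDr lerDl ler0n.
Qed.
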